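(* Fix $m\in\mathbb{Z}^+$ and $r\in\mathbb{N}$. Let $\mathsf{st}\colon X\to \mathbb{Z}$ be a function on a finite set $X$. If $$\sum_{x\in X:\ \mathsf{st}(x)\equiv l \pmod{2m}}\binom{\mathsf{st}(x)}{j}=\sum_{x\in X:\ \mathsf{st}(x)\equiv l+m \pmod{2m}}\binom{\mathsf{st}(x)}{j}$$ for every $l\in \mathbb{Z}_m$ and every $0\le j\le r-1$, then $\sum_{x\in X}q^{\mathsf{st}(x)}\in (1+q^m)^r\mathbb{Z}[q]$.
   Context: $\mathbb{Z}_m$ denotes the residues $\{0,1,\dots,m-1\}$. *)

From mathcomp Require Import all_boot all_order all_algebra.
Set Implicit Arguments. Unset Strict Implicit. Unset Printing Implicit Defensive.
Import Order.TTheory GRing.Theory Num.Theory.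
Local Open Scope ring_scope.

(* Generalized binomial coefficient binom(n, j) = n(n-1)...(n-j+1)/j! for an
   integer upper argument n (possibly negative); values are integers, we
   compute them in rat. *)
Definition binomz (n : int) (j : nat) : rat :=
  (\prod_(i < j) (n - i%:Z)%:~R) / (j`!)%:R.

(* f(q) = sum_x q^(st x) is a Laurent polynomial in general; membership in
   (1+q^m)^r Z[q] (extended to Laurent polynomials: (1+q^m)^r Z[q,q^-1]) is
   expressed after shifting by q^N so that all exponents are >= 0. *)
Definition laurent_in_ideal (X : finType) (st : X -> int) (m r : nat) : Prop :=
  exists (N : nat) (p : {poly int}),
    (forall x, 0 <= st x + N%:Z) /\
    \sum_(x : X) 'X^(absz (st x + N%:Z)) = (1 + 'X^m) ^+ r * p.

From mathcomp Require Import all_boot all_order all_algebra.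
From mathcomp Require Import ring zify.
Set Implicit Arguments.
Unset Strict Implicit.
Unset Printing Implicit Defensive.
Import Order.TTheory GRing.Theory Num.Theory.
Local Open Scope ring_scope.

(* Shift st by a multiple N of 2m so that all exponents e x = st x + N are
   natural, and split X according to the residue l of e x mod m: writing
   e x = l + m k x, a class contributes q^l H(q^m) with H = \sum q^(k x).
   Pascal's rule carries the hypothesis through the shift, where it says that
   \sum (-1)^(k x) C(e x, j) = 0 for j < r, i.e. (Taylor expansion at 1) that
   (q - 1)^r divides q^l H(-q^m). As q |-> -q^m sends 1 to -1 with derivative
   -m != 0, -1 is a root of H of multiplicity at least r, so (1 + q)^r divides
   H and (1 + q^m)^r divides H(q^m). *)

Lemma binomz0 (n : int) : binomz n 0 = 1.
Proof. by rewrite /binomz big_ord0 fact0 divr1. Qed.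

Lemma binomzD1 (n : int) (j : nat) :
  binomz (n + 1) j.+1 = binomz n j.+1 + binomz n j.
Proof.
rewrite /binomz big_ord_recl big_ord_recr /=.
under eq_bigr => i _ do rewrite /bump /= add1n -addn1 PoszD opprD addrACA subrr addr0.
rewrite factS natrM -[j.+1]addn1 natrD subr0 intrD intrB -!pmulrn.
have j_fact_neq0 : (j`!)%:R != 0 :> rat by rewrite pnatr_eq0 -lt0n fact_gt0.
by field; rewrite j_fact_neq0 natr1 pnatr_eq0.
Qed.

Lemma binomz_nat (n j : nat) : binomz n j = 'C(n, j)%:R.
Proof.
elim: n j => [|n IHn] [|j]; rewrite ?binomz0 ?bin0 //.
  by rewrite /binomz big_ord_recl /= subr0 !mul0r bin0n.
by rewrite -addn1 PoszD binomzD1 !IHn addn1 binS natrD.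
Qed.

Section BinomzShift.
Variables (X : finType) (A B : pred X) (z : X -> int) (r : nat).
Hypothesis eq_sum_binomz : forall j, (j < r)%N ->
  \sum_(x | A x) binomz (z x) j = \sum_(x | B x) binomz (z x) j.

Lemma eq_sum_binomzDn (k j : nat) : (j < r)%N ->
  \sum_(x | A x) binomz (z x + k%:Z) j = \sum_(x | B x) binomz (z x + k%:Z) j.
Proof.
elim: k j => [|k IHk] j j_lt_r.
  under eq_bigr do rewrite [_ + _]addr0; under [RHS]eq_bigr do rewrite [_ + _]addr0.
  exact: eq_sum_binomz.
case: j j_lt_r => [|j] j_lt_r.
  have sum_binomz0 (P : pred X) (w : X -> int) :
      \sum_(x | P x) binomz (w x) 0 = \sum_(x | P x) 1.
    by apply: eq_bigr => x _; apply: binomz0.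
  by rewrite !sum_binomz0; have := eq_sum_binomz j_lt_r; rewrite !sum_binomz0.
have binomzS x : binomz (z x + k.+1%:Z) j.+1 =
    binomz (z x + k%:Z) j.+1 + binomz (z x + k%:Z) j.
  by rewrite -binomzD1 -addn1 PoszD addrA.
under eq_bigr do rewrite binomzS; under [RHS]eq_bigr do rewrite binomzS.
by rewrite !big_split /= !IHk // ltnW.
Qed.

End BinomzShift.

Lemma big_left_multiple (R : pzSemiRingType) (I : finType) (P : pred I)
    (F : I -> R) (d : R) :
  (forall i, P i -> exists q, F i = d * q) -> exists q, \sum_(i | P i) F i = d * q.
Proof.
apply: (big_ind (fun y => exists q, y = d * q)); first by exists 0; rewrite mulr0.
by move=> _ _ [q1 ->] [q2 ->]; exists (q1 + q2); rewrite mulrDr.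
Qed.

Lemma Xn_expand_XsubC1 (R : nzRingType) (n B : nat) : (n < B)%N ->
  'X^n = \sum_(j < B) ('X - 1 : {poly R}) ^+ j *+ 'C(n, j).
Proof.
move=> n_lt_B; rewrite -{1}['X](subrK 1) exprD1n.
rewrite (big_ord_widen B (fun j => ('X - 1 : {poly R}) ^+ j *+ 'C(n, j))) //.
rewrite big_mkcond /=; apply: eq_bigr => j _.
by case: ltnP => // n_le_j; rewrite bin_small.
Qed.

(* Taylor expansion at 1: the coefficient of ('X - 1)^j in \sum_i c i 'X^(e i)
   is \sum_i c i 'C(e i, j). *)
Lemma XsubC1_expn_multiple (R : comNzRingType) (I : finType) (P : pred I)
    (c : I -> R) (e : I -> nat) (r : nat) :
  (forall j, (j < r)%N -> \sum_(i | P i) c i *+ 'C(e i, j) = 0) ->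
  exists D, \sum_(i | P i) c i *: 'X^(e i) = ('X - 1) ^+ r * D.
Proof.
move=> low_coefs0; pose B := (\max_i e i).+1.
pose a j := \sum_(i | P i) c i *+ 'C(e i, j).
have expand : \sum_(i | P i) c i *: 'X^(e i) = \sum_(j < B) a j *: ('X - 1) ^+ j.
  under eq_bigr => i _ do rewrite (@Xn_expand_XsubC1 _ (e i) B) ?ltnS ?leq_bigmax // scaler_sumr.
  rewrite exchange_big /=; apply: eq_bigr => j _.
  by rewrite scaler_suml; apply: eq_bigr => i _; rewrite -scalerMnr scalerMnl.
exists (\sum_(j < B) a j *: ('X - 1) ^+ (j - r)).
rewrite expand mulr_sumr; apply: eq_bigr => j _.
have [j_lt_r | r_le_j] := ltnP j r; first by rewrite /a low_coefs0 // !scale0r mulr0.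
by rewrite -scalerAr -exprD subnKC.
Qed.

(* Write H = R0 ('X + 1)^s with R0(-1) != 0; then H(-'X^m) = ('X - 1)^s C with
   C(1) = (-m)^s R0(-1) != 0, so the multiplicity s of -1 in H is at least r. *)
Lemma XaddC1_expn_multiple_comp (R : idomainType) (G H D : {poly R}) (m r : nat) :
  m%:R != 0 :> R -> G.[1] != 0 -> G * (H \Po - 'X^m) = ('X - 1) ^+ r * D ->
  exists Q, H = ('X + 1) ^+ r * Q.
Proof.
move=> m_neq0 G1_neq0 GH_eq.
have [s [H0 H0_nroot H_eq]] := multiplicity_XsubC H (-1).
have [->|H_neq0] := eqVneq H 0; first by exists 0; rewrite mulr0.
rewrite H_neq0 polyCN opprK polyC1 /= in H0_nroot H_eq.
suff r_le_s : (r <= s)%N.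
  by exists (H0 * ('X + 1) ^+ (s - r)); rewrite H_eq -{1}(subnKC r_le_s) exprD mulrCA.
rewrite leqNgt; apply/negP => s_lt_r.
pose S := \sum_(i < m) 'X^i : {poly R}.
have comp_XaddC1 : ('X + 1) \Po - 'X^m = ('X - 1) * - S.
  by rewrite rmorphD rmorph1 /= comp_polyX mulrN -subrX1 opprB addrC.
pose C := G * (H0 \Po - 'X^m) * (- S) ^+ s.
have XsubC1_neq0 : ('X - 1 : {poly R}) ^+ s != 0 by rewrite expf_neq0 // polyXsubC_eq0.
have /(mulfI XsubC1_neq0) C_eq :
    ('X - 1) ^+ s * C = ('X - 1) ^+ s * (('X - 1) ^+ (r - s) * D).
  rewrite mulrA -exprD subnKC; last exact: ltnW.
  by rewrite -GH_eq H_eq comp_polyM rmorphXn /= comp_XaddC1 /C exprMn; ring.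
have S1 : S.[1] = m%:R.
  rewrite horner_sum (eq_bigr (fun=> 1)) ?sumr_const ?card_ord // => i _.
  by rewrite hornerXn expr1n.
have := congr1 (horner^~ 1) C_eq.
rewrite /C !hornerE horner_comp !hornerE S1 subrr expr0n subn_eq0 leqNgt s_lt_r /=.
rewrite !mul0r => /eqP; apply/negP.
by rewrite !mulf_neq0 ?expf_neq0 ?oppr_eq0 ?expr1n.
Qed.

Lemma sum_Xn_residue_class_multiple (R : idomainType) (I : finType) (P : pred I)
    (e : I -> nat) (l m r : nat) :
  m%:R != 0 :> R -> (forall i, P i -> e i %% m = l)%N ->
  (forall j, (j < r)%N -> \sum_(i | P i) (-1) ^+ (e i %/ m) *+ 'C(e i, j) = 0 :> R) ->
  exists Q : {poly R}, \sum_(i | P i) 'X^(e i) = (1 + 'X^m) ^+ r * Q.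
Proof.
move=> m_neq0 e_mod signed_sums0.
pose H := \sum_(i | P i) 'X^(e i %/ m) : {poly R}.
have comp_H q : 'X^l * (H \Po q) = \sum_(i | P i) 'X^l * q ^+ (e i %/ m).
  by rewrite rmorph_sum mulr_sumr; apply: eq_bigr => i _; rewrite rmorphXn /= comp_polyX.
have XnE i : P i -> 'X^(e i) = 'X^l * ('X^m) ^+ (e i %/ m) :> {poly R}.
  by move=> Pi; rewrite -exprM -exprD mulnC addnC -(e_mod i Pi) -divn_eq.
have [D signed_eq] := XsubC1_expn_multiple signed_sums0.
have [Q H_eq] : exists Q, H = ('X + 1) ^+ r * Q.
  apply: (@XaddC1_expn_multiple_comp _ 'X^l _ D m) => //.
    by rewrite hornerXn expr1n oner_neq0.
  rewrite -signed_eq comp_H; apply: eq_bigr => i Pi.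
  by rewrite [(- 'X^m) ^+ _]exprNn mulrCA -XnE // -mul_polyC rmorph_sign.
exists ('X^l * (Q \Po 'X^m)).
rewrite (eq_bigr _ XnE) -comp_H H_eq comp_polyM rmorphXn rmorphD rmorph1 /= comp_polyX.
by rewrite addrC mulrCA.
Qed.

Lemma eqn_mod_double (e m l : nat) (b : bool) : (l < m)%N ->
  ((e == l + b * m %[mod 2 * m]) = (e %% m == l) && (odd (e %/ m) == b))%N.
Proof.
move=> l_lt_m; have m_gt0 : (0 < m)%N by apply: leq_ltn_trans l_lt_m.
have e_mod_m := ltn_pmod e m_gt0.
have e_mod : (e %% (2 * m) = odd (e %/ m) * m + e %% m)%N.
  have {1}-> : e = ((e %/ m)./2 * (2 * m) + (odd (e %/ m) * m + e %% m))%N.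
    by rewrite {1}(divn_eq e m) -{1}(odd_double_half (e %/ m)) -muln2; ring.
  by rewrite modnMDl modn_small //; case: (odd _); lia.
rewrite e_mod (@modn_small (l + b * m)); last by case: b; lia.
by move: e_mod_m; case: b; case: (odd _) => /=; lia.
Qed.

Lemma eqz_mod_shift (z : int) (a d N : nat) : (d %| N)%N -> 0 <= z + N%:Z ->
  (z == a%:Z %[mod d%:Z])%Z = (absz (z + N%:Z)%R == a %[mod d])%N.
Proof.
move=> /dvdnP[k ->] zN_ge0.
by rewrite -[in LHS](modzMDl k) addrC -PoszM -{1}(gez0_abs zN_ge0) !modz_nat.
Qed.

Section BalancedStatistic.
Variables (X : finType) (st : X -> int) (m r N : nat).
Hypotheses (N_dvd : (2 * m %| N)%N) (st_N_ge0 : forall x, 0 <= st x + N%:Z).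
Hypothesis balanced : forall (l : 'I_m) (j : nat), (j < r)%N ->
  \sum_(x : X | (st x == (l : nat)%:Z %[mod (2 * m)%N%:Z])%Z) binomz (st x) j =
  \sum_(x : X | (st x == (l + m)%N%:Z %[mod (2 * m)%N%:Z])%Z) binomz (st x) j.

Let e x := absz (st x + N%:Z).

Lemma signed_binomial_class_sum (l : 'I_m) (j : nat) : (j < r)%N ->
  \sum_(x | (e x %% m == l)%N) (-1) ^+ (e x %/ m) *+ 'C(e x, j) = 0%R :> int.
Proof.
move=> j_lt_r; apply: (@intr_inj rat); rewrite rmorph_sum rmorph0 /=.
have classE x (b : bool) : ((e x %% m == l) && (odd (e x %/ m) == b))%N =
    (st x == (l + b * m)%N%:Z %[mod (2 * m)%N%:Z])%Z.
  by rewrite (eqz_mod_shift _ N_dvd (st_N_ge0 x)) eqn_mod_double.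
have even_classE x : ((e x %% m == l) && ~~ odd (e x %/ m))%N =
    (st x == (l : nat)%:Z %[mod (2 * m)%N%:Z])%Z.
  by rewrite -eqbF_neg classE mul0n addn0.
have odd_classE x : ((e x %% m == l) && odd (e x %/ m))%N =
    (st x == (l + m)%N%:Z %[mod (2 * m)%N%:Z])%Z.
  by rewrite -[odd _]eqb_id classE mul1n.
under eq_bigr => x _ do
  rewrite rmorphMn rmorph_sign -signr_odd -mulr_natr -binomz_nat gez0_abs //.
rewrite (bigID (fun x => odd (e x %/ m))) /=.
rewrite (eq_bigr (fun x => - binomz (st x + N%:Z) j)); last first.
  by move=> x /andP[_ ->]; rewrite expr1 mulN1r.
rewrite [X in _ + X](eq_bigr (fun x => binomz (st x + N%:Z) j)); last first.
  by move=> x /andP[_ /negbTE ->]; rewrite expr0 mul1r.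
rewrite sumrN (eq_bigl _ _ even_classE) (eq_bigl _ _ odd_classE).
by rewrite (eq_sum_binomzDn (balanced l) N j_lt_r) addNr.
Qed.

End BalancedStatistic.

Theorem proposition4p7 (m r : nat) (X : finType) (st : X -> int) :
  (0 < m)%N ->
  (forall (l : 'I_m) (j : nat), (j < r)%N ->
     \sum_(x : X | (st x == (l : nat)%:Z %[mod (2 * m)%N%:Z])%Z) binomz (st x) j =
     \sum_(x : X | (st x == (l + m)%N%:Z %[mod (2 * m)%N%:Z])%Z) binomz (st x) j) ->
  laurent_in_ideal st m r.
Proof.
move=> m_gt0 balanced.
pose N := (2 * m * \max_x absz (st x))%N.
have N_dvd : (2 * m %| N)%N by apply: dvdn_mulr.
have st_N_ge0 x : 0 <= st x + N%:Z.
  have st_le_max : (absz (st x) <= \max_y absz (st y))%N.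
    exact: (leq_bigmax (F := fun y => absz (st y))).
  have max_le_N : (\max_y absz (st y) <= N)%N by rewrite leq_pmull // muln_gt0 m_gt0.
  lia.
exists N; suff [p sum_eq] : exists p : {poly int},
    \sum_x 'X^(absz (st x + N%:Z)) = (1 + 'X^m) ^+ r * p by exists p.
pose e x := absz (st x + N%:Z).
rewrite (partition_big (fun x => Ordinal (ltn_pmod (e x) m_gt0)) predT) //=.
apply: big_left_multiple => l _.
rewrite (eq_bigl (fun x => (e x %% m == l)%N)) //.
apply: (sum_Xn_residue_class_multiple (l := l)) => [||j j_lt_r].
- by rewrite pnatr_eq0 -lt0n.
- by move=> x /eqP.
- exact: signed_binomial_class_sum N_dvd st_N_ge0 balanced l j j_lt_r.
Qed.
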